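(* Let $\Phi_1,\Phi_2:M_n(\mathbb C)\to M_n(\mathbb C)$ be linear maps which are completely positive, trace-preserving and unital. Let $X,Y\in M_n(\mathbb C)$ satisfy $\Phi_1(X)=Y$ and $\Phi_2(Y)=X$. Then $\Phi_1(XW)=Y\Phi_1(W)$ and $\Phi_1(WX)=\Phi_1(W)Y$ for all $W\in M_n(\mathbb C)$. Furthermore, $X$ and $Y$ are cospectral, and $\Phi_1^*(Y)=X$.
   Context: $\Phi^*$ denotes the adjoint of $\Phi$ with respect to the trace inner product $\langle A,B\rangle=\mathrm{tr}(A^*B)$. Unital means $\Phi(I)=I$. *)

(* matrices over C := R[i] for R : realType (i.e. the complex numbers). *)
From HB Require Import structures.
From mathcomp Require Import all_boot all_order all_algebra.
From mathcomp Require Import complex reals.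
Set Implicit Arguments. Unset Strict Implicit. Unset Printing Implicit Defensive.
Import Order.TTheory GRing.Theory Num.Theory.
Local Open Scope ring_scope.

Definition mxadj (C : numClosedFieldType) (m n : nat) (A : 'M[C]_(m, n)) : 'M[C]_(n, m) :=
  (map_mx Num.conj A)^T.

(* Positive semidefinite block matrix: A : 'M['M_n]_k is the k x k block matrix
   with n x n blocks A i j, viewed as an element of M_k(M_n(C)) = M_{kn}(C);
   it is PSD iff  sum_{i,j} v_i^* (A i j) v_j >= 0  for every vector
   v = (v_1,...,v_k) in (C^n)^k. *)
Definition psd_block (C : numClosedFieldType) (n k : nat) (A : 'M['M[C]_n]_k) : Prop :=
  forall v : 'I_k -> 'cV[C]_n,
    0 <= \sum_(i < k) \sum_(j < k) (mxadj (v i) *m A i j *m v j) 0 0.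

(* Completely positive: id_k (x) Phi maps PSD matrices of M_k(M_n) to PSD ones, for all k. *)
Definition completely_positive (C : numClosedFieldType) (n : nat)
    (Phi : 'M[C]_n -> 'M[C]_n) : Prop :=
  forall (k : nat) (A : 'M['M[C]_n]_k), psd_block A -> psd_block (map_mx Phi A).

Definition trace_preserving (C : numClosedFieldType) (n : nat)
    (Phi : 'M[C]_n -> 'M[C]_n) : Prop :=
  forall A, \tr (Phi A) = \tr A.

Definition unital (C : numClosedFieldType) (n : nat) (Phi : 'M[C]_n -> 'M[C]_n) : Prop :=
  Phi 1%:M = 1%:M.

(* The adjoint Phi^* w.r.t. <A,B> = tr(A^* B), written out in the standard basis:
   (Phi^* A)_{ij} = <E_ij, Phi^* A> = <Phi E_ij, A> = tr((Phi E_ij)^* A). *)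
Definition adjoint_map (C : numClosedFieldType) (n : nat)
    (Phi : 'M[C]_n -> 'M[C]_n) (A : 'M[C]_n) : 'M[C]_n :=
  \matrix_(i, j) \tr (mxadj (Phi (delta_mx i j)) *m A).

Definition cospectral (C : numClosedFieldType) (n : nat) (X Y : 'M[C]_n) : Prop :=
  char_poly X = char_poly Y.

(* A unital completely positive map satisfies the Schwarz inequality in block
   form: for the defect D(a, b) = Phi(a^* b) - Phi(a)^* Phi(b), the 2 x 2 block
   matrix [D(a, a), D(a, w); D(w, a), D(w, w)] is positive semidefinite.  Hence
   D(a, a) has a nonnegative diagonal, and when that diagonal vanishes D(a, w) = 0
   for every w, i.e. Phi(a^* w) = Phi(a)^* Phi(w).  If Phi1 X = Y and Phi2 Y = X
   with both maps trace preserving, then tr D1(X, X) = tr (X^* X) - tr (Y^* Y)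
   = - tr D2(Y, Y), so both traces vanish; applied to X and to X^* this yields
   the two multiplicativity identities.  Consequently Phi1 (p X) = p Y for every
   polynomial p, so tr (p X) = tr (p Y), which by Schur triangularization forces
   X and Y to have the same eigenvalues with multiplicities.  The formula for the
   adjoint is the identity Phi1 (X^* W) = Y^* Phi1 W read through the trace. *)

From HB Require Import structures.
From mathcomp Require Import all_boot all_order all_algebra.
From mathcomp Require Import complex reals.
From mathcomp Require Import ring.
Set Implicit Arguments. Unset Strict Implicit. Unset Printing Implicit Defensive.
Import Order.TTheory GRing.Theory Num.Theory.
Local Open Scope ring_scope.

Lemma mxtrace_delta_mull (R : comNzRingType) n (A : 'M[R]_n) i j :
  \tr (delta_mx j i *m A) = A i j.
Proof.
by rewrite -(mul_delta_mx (0 : 'I_1)) -mulmxA -rowE mxtrace_mulC -colE trace_mx11 !mxE.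
Qed.

Section ConjugateTranspose.
Variable C : numClosedFieldType.

Lemma mxadjE m n (A : 'M[C]_(m, n)) i j : mxadj A i j = (A j i)^*.
Proof. by rewrite !mxE. Qed.

Lemma mxadjK m n (A : 'M[C]_(m, n)) : mxadj (mxadj A) = A.
Proof. by apply/matrixP => i j; rewrite !mxE conjCK. Qed.

Lemma mxadjM m n p (A : 'M[C]_(m, n)) (B : 'M_(n, p)) :
  mxadj (A *m B) = mxadj B *m mxadj A.
Proof. by rewrite /mxadj map_mxM trmx_mul. Qed.

Lemma mxadjD m n (A B : 'M[C]_(m, n)) : mxadj (A + B) = mxadj A + mxadj B.
Proof. by rewrite /mxadj map_mxD linearD. Qed.

Lemma mxadjN m n (A : 'M[C]_(m, n)) : mxadj (- A) = - mxadj A.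
Proof. by rewrite /mxadj map_mxN linearN. Qed.

Lemma mxadjZ m n a (A : 'M[C]_(m, n)) : mxadj (a *: A) = a^* *: mxadj A.
Proof. by apply/matrixP => i j; rewrite !mxE rmorphM. Qed.

Lemma mxadj_sum m n k (F : 'I_k -> 'M[C]_(m, n)) :
  mxadj (\sum_(i < k) F i) = \sum_(i < k) mxadj (F i).
Proof. by rewrite /mxadj raddf_sum /= linear_sum. Qed.

Lemma mxadj_scalar n a : mxadj (a%:M : 'M[C]_n) = a^*%:M.
Proof. by rewrite /mxadj map_scalar_mx tr_scalar_mx. Qed.

Lemma mxadj_delta m n i j : mxadj (delta_mx i j : 'M[C]_(m, n)) = delta_mx j i.
Proof. by rewrite /mxadj map_delta_mx ?conjC1 // trmx_delta. Qed.

Lemma mxtrace_adj n (A : 'M[C]_n) : \tr (mxadj A) = (\tr A)^*.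
Proof. by rewrite /mxadj mxtrace_tr rmorph_sum; apply: eq_bigr => i _; rewrite mxE. Qed.

End ConjugateTranspose.

Definition dotcv (C : numClosedFieldType) n (u v : 'cV[C]_n) : C := (mxadj u *m v) 0 0.

Section DotProduct.
Variables (C : numClosedFieldType) (n : nat).
Implicit Types (u v w : 'cV[C]_n) (M : 'M[C]_n).

Lemma dotcvE u v : dotcv u v = \sum_(l < n) (u l 0)^* * v l 0.
Proof. by rewrite /dotcv mxE; apply: eq_bigr => l _; rewrite !mxE. Qed.

Lemma dotcv_ge0 u : 0 <= dotcv u u.
Proof. by rewrite dotcvE; apply: sumr_ge0 => l _; rewrite mulrC mul_conjC_ge0. Qed.

Lemma dotcvDl u v w : dotcv (u + v) w = dotcv u w + dotcv v w.
Proof. by rewrite /dotcv mxadjD mulmxDl mxE. Qed.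

Lemma dotcvDr u v w : dotcv w (u + v) = dotcv w u + dotcv w v.
Proof. by rewrite /dotcv mulmxDr mxE. Qed.

Lemma dotcvNl u v : dotcv (- u) v = - dotcv u v.
Proof. by rewrite /dotcv mxadjN mulNmx mxE. Qed.

Lemma dotcvNr u v : dotcv u (- v) = - dotcv u v.
Proof. by rewrite /dotcv mulmxN mxE. Qed.

Lemma dotcvZl a u v : dotcv (a *: u) v = a^* * dotcv u v.
Proof. by rewrite /dotcv mxadjZ -scalemxAl mxE. Qed.

Lemma dotcvZr a u v : dotcv u (a *: v) = a * dotcv u v.
Proof. by rewrite /dotcv -scalemxAr mxE. Qed.

Lemma dotcv0l v : dotcv 0 v = 0.
Proof. by rewrite -(scale0r 0) dotcvZl conjC0 mul0r. Qed.

Lemma dotcv0r u : dotcv u 0 = 0.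
Proof. by rewrite /dotcv mulmx0 mxE. Qed.

Lemma dotcv_mxadj M u v : dotcv u (mxadj M *m v) = dotcv (M *m u) v.
Proof. by rewrite /dotcv mxadjM mulmxA. Qed.

Lemma dotcv_delta M p q : dotcv (delta_mx p 0) (M *m delta_mx q 0) = M p q.
Proof. by rewrite /dotcv mxadj_delta mulmxA -rowE -colE !mxE. Qed.

End DotProduct.

Section Quadratic.
Variable C : numClosedFieldType.

Lemma conj_of_quadratic_ge0 (c0 c2 a b : C) :
  c0 \is Num.real -> c2 \is Num.real ->
  (forall s, 0 <= c0 + s * a + s^* * b + s^* * (s * c2)) -> b = a^*.
Proof.
move=> c0R c2R ge0.
have /conj_Creal e1 := ger0_real (ge0 1).
have /conj_Creal e2 := ger0_real (ge0 'i).
rewrite conjC1 !mul1r in e1; rewrite conjCi in e2.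
rewrite !(rmorphD, rmorphM, rmorphN) /= conjCi (conj_Creal c0R) (conj_Creal c2R) in e1 e2.
(* [s = 1] and [s = 'i] show that [a + b] and ['i (a - b)] are real. *)
have : (b - a^*) * 2 = 0.
  have -> : (b - a^*) * 2 =
      (c0 + a + b + c2) - (c0 + a^* + b^* + c2)
    + 'i * ((c0 + 'i * a + - 'i * b + - 'i * ('i * c2))
            - (c0 + - 'i * a^* + - - 'i * b^* + - - 'i * (- 'i * c2)))
    - ('i ^+ 2 + 1) * (a - b + a^* - b^*) by ring.
  by rewrite e1 e2 !subrr sqrCi addNr mul0r mulr0 subr0 addr0.
by move/eqP; rewrite mulf_eq0 pnatr_eq0 orbF subr_eq0 => /eqP.
Qed.

Lemma eq0_of_quadratic_ge0 (c a : C) : 0 <= c ->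
  (forall s, 0 <= s * a + s^* * a^* + s^* * (s * c)) -> a = 0.
Proof.
move=> c_ge0 ge0; pose d := c + 1.
have d_gt0 : 0 < d by rewrite ltr_wpDl.
have d_neq0 : d != 0 by rewrite gt_eqF.
(* [s = - a^* / d] makes the form equal to [- |a|^2 (c + 2) / d^2]. *)
have := ge0 (- a^* / d).
rewrite rmorphM /= rmorphN /= conjCK fmorphV /= (conj_Creal (gtr0_real d_gt0)).
have -> : - a^* / d * a + - a / d * a^* + - a / d * (- a^* / d * c)
    = - (a * a^* * ((c + 2) / d ^+ 2)) by rewrite /d; field; rewrite -/d.
rewrite oppr_ge0 pmulr_lle0 ?divr_gt0 ?exprn_gt0 ?ltr_wpDl //.
by move=> aa_le0; apply/eqP; rewrite -mul_conjC_eq0 eq_le aa_le0 mul_conjC_ge0.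
Qed.

End Quadratic.

Lemma psd_block_gram (C : numClosedFieldType) n k (A : 'I_k -> 'M[C]_n) :
  psd_block (\matrix_(i, j) (mxadj (A i) *m A j)).
Proof.
move=> v; pose w := \sum_(i < k) A i *m v i.
suff -> : \sum_(i < k) \sum_(j < k)
    (mxadj (v i) *m (\matrix_(i, j) (mxadj (A i) *m A j)) i j *m v j) 0 0
    = dotcv w w by apply: dotcv_ge0.
rewrite /dotcv /w mxadj_sum mulmx_suml summxE; apply: eq_bigr => i _.
rewrite mulmx_sumr summxE; apply: eq_bigr => j _.
by rewrite mxE mxadjM !mulmxA.
Qed.

Section CompletelyPositive.
Variables (C : numClosedFieldType) (n : nat) (Phi : 'M[C]_n -> 'M[C]_n).
Hypothesis Phi_cp : completely_positive Phi.
Implicit Types (A a w : 'M[C]_n) (v x y : 'cV[C]_n).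

Lemma cp_gram_ge0 k (A : 'I_k -> 'M[C]_n) (v : 'I_k -> 'cV[C]_n) :
  0 <= \sum_(i < k) \sum_(j < k) dotcv (v i) (Phi (mxadj (A i) *m A j) *m v j).
Proof.
have := Phi_cp (psd_block_gram A) v; congr (_ <= _).
by apply: eq_bigr => i _; apply: eq_bigr => j _; rewrite /dotcv mulmxA !mxE.
Qed.

Lemma cp_gram1_ge0 A v : 0 <= dotcv v (Phi (mxadj A *m A) *m v).
Proof.
by have := cp_gram_ge0 (fun _ : 'I_1 => A) (fun=> v); rewrite !big_ord1.
Qed.

Lemma cp_gram2_ge0 a0 a1 v0 v1 :
  0 <= dotcv v0 (Phi (mxadj a0 *m a0) *m v0) + dotcv v0 (Phi (mxadj a0 *m a1) *m v1)
     + dotcv v1 (Phi (mxadj a1 *m a0) *m v0) + dotcv v1 (Phi (mxadj a1 *m a1) *m v1).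
Proof.
have := cp_gram_ge0 (fun i : 'I_2 => [:: a0; a1]`_i) (fun i : 'I_2 => [:: v0; v1]`_i).
by rewrite !big_ord_recl !big_ord0 /= !addr0 !addrA.
Qed.

Lemma cp_gram3_ge0 a0 a1 a2 v0 v1 v2 :
  0 <= dotcv v0 (Phi (mxadj a0 *m a0) *m v0) + dotcv v0 (Phi (mxadj a0 *m a1) *m v1)
     + dotcv v0 (Phi (mxadj a0 *m a2) *m v2)
     + dotcv v1 (Phi (mxadj a1 *m a0) *m v0) + dotcv v1 (Phi (mxadj a1 *m a1) *m v1)
     + dotcv v1 (Phi (mxadj a1 *m a2) *m v2)
     + dotcv v2 (Phi (mxadj a2 *m a0) *m v0) + dotcv v2 (Phi (mxadj a2 *m a1) *m v1)
     + dotcv v2 (Phi (mxadj a2 *m a2) *m v2).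
Proof.
have := cp_gram_ge0 (fun i : 'I_3 => [:: a0; a1; a2]`_i)
                    (fun i : 'I_3 => [:: v0; v1; v2]`_i).
by rewrite !big_ord_recl !big_ord0 /= !addr0 !addrA.
Qed.

Hypothesis Phi_unital : unital Phi.

Lemma cp_mxadj A : Phi (mxadj A) = mxadj (Phi A).
Proof.
apply/matrixP => q p; rewrite mxadjE.
apply: (@conj_of_quadratic_ge0 _ 1
  (dotcv (delta_mx q 0) (Phi (mxadj A *m A) *m delta_mx q 0))).
- exact: real1.
- exact/ger0_real/cp_gram1_ge0.
move=> s; have := cp_gram2_ge0 1%:M A (delta_mx p 0) (s *: delta_mx q 0).
rewrite mxadj_scalar conjC1 !mul1mx mulmx1 Phi_unital dotcv_delta mxE eqxx /=.
by rewrite -!scalemxAr !dotcvZr !dotcvZl !dotcv_delta mulrCA.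
Qed.

Definition defect a b := Phi (mxadj a *m b) - mxadj (Phi a) *m Phi b.

Lemma defect_psd2 a w x y :
  0 <= dotcv x (defect a a *m x) + dotcv x (defect a w *m y)
     + dotcv y (defect w a *m x) + dotcv y (defect w w *m y).
Proof.
(* The Gram block of [(a, w, 1)] evaluated at [(x, y, - (Phi a x + Phi w y))]
   completes the square. *)
have := cp_gram3_ge0 a w 1%:M x y (- (Phi a *m x + Phi w *m y)).
rewrite mxadj_scalar conjC1 !mulmx1 !mul1mx Phi_unital mul1mx !cp_mxadj.
rewrite !dotcv_mxadj !dotcvNr !dotcvNl !dotcvDr !dotcvDl.
rewrite /defect !mulmxBl !dotcvDr !dotcvNr -!mulmxA !dotcv_mxadj.
by move/le_trans; apply; rewrite le_eqVlt; apply/predU1P; left; ring.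
Qed.

Lemma defect_mxadj a w : defect w a = mxadj (defect a w).
Proof. by rewrite /defect mxadjD mxadjN !mxadjM mxadjK -!cp_mxadj mxadjM mxadjK. Qed.

Lemma defect_diag_ge0 a p : 0 <= defect a a p p.
Proof.
have := defect_psd2 a a (delta_mx p 0) 0.
by rewrite !dotcv0l !mulmx0 !dotcv0r !addr0 dotcv_delta.
Qed.

Lemma mxtrace_defect_ge0 a : 0 <= \tr (defect a a).
Proof. by apply: sumr_ge0 => i _; apply: defect_diag_ge0. Qed.

Lemma cp_mulmx_of_defect a :
  (forall p, defect a a p p = 0) ->
  forall w, Phi (mxadj a *m w) = mxadj (Phi a) *m Phi w.
Proof.
move=> diag0 w; apply/eqP; rewrite -subr_eq0 -/(defect a w); apply/eqP/matrixP => p q.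
rewrite [RHS]mxE; apply: (@eq0_of_quadratic_ge0 _ (defect w w q q)).
  have := defect_psd2 a w 0 (delta_mx q 0).
  by rewrite !dotcv0l !mulmx0 !dotcv0r !add0r dotcv_delta.
move=> s; have := defect_psd2 a w (delta_mx p 0) (s *: delta_mx q 0).
rewrite -!scalemxAr !dotcvZr !dotcvZl !dotcv_delta diag0 add0r.
by rewrite (defect_mxadj a w) mxadjE mulrCA.
Qed.

Lemma cp_mulmxr_of_mulmxl X Y :
  (forall W, Phi (mxadj X *m W) = mxadj Y *m Phi W) ->
  forall W, Phi (W *m X) = Phi W *m Y.
Proof.
move=> mulX W; rewrite -[LHS]mxadjK -cp_mxadj mxadjM mulX.
by rewrite mxadjM cp_mxadj !mxadjK.
Qed.

End CompletelyPositive.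

Lemma adjoint_map_of_mulmxl (C : numClosedFieldType) n (Phi : 'M[C]_n -> 'M[C]_n) X Y :
  trace_preserving Phi -> (forall W, Phi (mxadj X *m W) = mxadj Y *m Phi W) ->
  adjoint_map Phi Y = X.
Proof.
move=> Phi_tp mulX; apply/matrixP => i j; rewrite mxE.
rewrite -[mxadj _ *m Y]mxadjK mxadjM mxadjK mxtrace_adj -mulX Phi_tp.
by rewrite -mxtrace_adj mxadjM mxadjK mxadj_delta mxtrace_delta_mull.
Qed.

Lemma mxtrace_defect (C : numClosedFieldType) n (Phi : {linear 'M[C]_n -> 'M[C]_n}) a :
  trace_preserving Phi ->
  \tr (defect Phi a a) = \tr (mxadj a *m a) - \tr (mxadj (Phi a) *m Phi a).
Proof. by move=> Phi_tp; rewrite /defect linearB /= Phi_tp. Qed.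

Section ChannelCycle.
Variables (C : numClosedFieldType) (n : nat) (Phi Psi : {linear 'M[C]_n -> 'M[C]_n}).
Hypotheses (Phi_cp : completely_positive Phi) (Phi_tp : trace_preserving Phi).
Hypotheses (Phi_unital : unital Phi).
Hypotheses (Psi_cp : completely_positive Psi) (Psi_tp : trace_preserving Psi).
Hypotheses (Psi_unital : unital Psi).

Lemma cp_mulmx_of_cycle a b : Phi a = b -> Psi b = a ->
  forall w, Phi (mxadj a *m w) = mxadj b *m Phi w.
Proof.
move=> Phi_ab Psi_ba; rewrite -Phi_ab; apply: cp_mulmx_of_defect => // p.
(* The two defects have opposite traces and nonnegative diagonals. *)
have tr_Phi0 : \tr (defect Phi a a) = 0.
  apply/eqP; rewrite eq_le mxtrace_defect_ge0 // andbT -oppr_ge0.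
  have := mxtrace_defect_ge0 Psi_cp Psi_unital b.
  by rewrite !mxtrace_defect // Phi_ab Psi_ba opprB.
by apply: (psumr_eq0P _ tr_Phi0) => // i _; apply: defect_diag_ge0.
Qed.

End ChannelCycle.

Lemma perm_eq_sum_horner (F : numDomainType) (s1 s2 : seq F) :
  (forall p : {poly F}, \sum_(x <- s1) p.[x] = \sum_(x <- s2) p.[x]) ->
  perm_eq s1 s2.
Proof.
move=> eq_sum; apply/allP => l _; apply/eqP.
(* [q] vanishes on [s1 ++ s2] except at [l], so its sums count occurrences of [l]. *)
pose q := \prod_(mu <- s1 ++ s2 | mu != l) ('X - mu%:P).
have q_l : q.[l] != 0.
  rewrite /q horner_prod prodf_seq_neq0; apply/allP => mu _; apply/implyP => mu_l.
  by rewrite hornerXsubC subr_eq0 eq_sym.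
have sum_q s : {subset s <= s1 ++ s2} -> \sum_(x <- s) q.[x] = q.[l] *+ count_mem l s.
  move=> s_sub; rewrite (bigID (pred1 l)) /= [X in _ + X]big1_seq.
    by rewrite addr0 (eq_bigr (fun=> q.[l])) ?big_const_seq ?iter_addr_0 // => x /eqP ->.
  move=> x /andP [x_l /s_sub x_s].
  rewrite /q horner_prod; apply/eqP; rewrite prodf_seq_eq0; apply/hasP; exists x => //=.
  by rewrite x_l hornerXsubC subrr eqxx.
apply: (mulrIn q_l); rewrite -!sum_q ?eq_sum // => x x_s; rewrite mem_cat x_s ?orbT //.
Qed.

Section TriangularMatrices.
Variables (R : comNzRingType) (n : nat).
Implicit Types (A B : 'M[R]_n).

Lemma addmx_is_trig A B : is_trig_mx A -> is_trig_mx B -> is_trig_mx (A + B).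
Proof.
move=> /is_trig_mxP A_trig /is_trig_mxP B_trig; apply/is_trig_mxP => i j lt_ij.
by rewrite mxE A_trig // B_trig // addr0.
Qed.

Lemma mulmx_is_trig A B : is_trig_mx A -> is_trig_mx B -> is_trig_mx (A *m B).
Proof.
move=> /is_trig_mxP A_trig /is_trig_mxP B_trig; apply/is_trig_mxP => i j lt_ij.
rewrite mxE big1 // => k _; have [lt_ik|le_ki] := ltnP i k.
  by rewrite A_trig ?mul0r.
by rewrite B_trig ?mulr0 // (leq_ltn_trans le_ki lt_ij).
Qed.

Lemma mulmx_trig_diag A B i : is_trig_mx A -> is_trig_mx B ->
  (A *m B) i i = A i i * B i i.
Proof.
move=> /is_trig_mxP A_trig /is_trig_mxP B_trig.
rewrite mxE (bigD1 i) //= big1 ?addr0 // => k k_i.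
have [lt_ik|le_ki] := ltnP i k; first by rewrite A_trig ?mul0r.
by rewrite B_trig ?mulr0 // ltn_neqAle le_ki andbT.
Qed.

End TriangularMatrices.

Section TriangularHorner.
Variables (R : comNzRingType) (n : nat) (T : 'M[R]_n.+1).
Hypothesis T_trig : is_trig_mx T.

Lemma horner_mx_is_trig p : is_trig_mx (horner_mx T p).
Proof.
elim/poly_ind: p => [|p c IHp]; first by rewrite rmorph0 mx0_is_trig.
rewrite rmorphD rmorphM /= horner_mx_X horner_mx_C.
by rewrite addmx_is_trig ?mulmx_is_trig ?scalar_mx_is_trig.
Qed.

Lemma horner_mx_trig_diag p i : horner_mx T p i i = p.[T i i].
Proof.
elim/poly_ind: p => [|p c IHp]; first by rewrite rmorph0 horner0 mxE.
rewrite rmorphD rmorphM /= horner_mx_X horner_mx_C hornerMXaddC.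
by rewrite mxE -mulmxE mulmx_trig_diag ?horner_mx_is_trig // IHp !mxE eqxx.
Qed.

End TriangularHorner.

Lemma char_poly_uconj (R : comUnitRingType) n (P A : 'M[R]_n) : P \in unitmx ->
  char_poly (P *m A *m invmx P) = char_poly A.
Proof.
move=> P_unit; rewrite /char_poly /char_poly_mx.
set P' := map_mx polyC P; set Q' := map_mx polyC (invmx P).
have P'Q' : P' *m Q' = 1%:M by rewrite -map_mxM mulmxV // map_mx1.
have -> : 'X%:M - map_mx polyC (P *m A *m invmx P) = P' *m ('X%:M - map_mx polyC A) *m Q'.
  rewrite !map_mxM mulmxBr mulmxBl; congr (_ - _).
  by rewrite mul_mx_scalar -scalemxAl P'Q' scalemx1.
by rewrite !det_mulmx mulrAC -det_mulmx P'Q' det1 mul1r.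
Qed.

Lemma mx_spectrum (C : numClosedFieldType) n (A : 'M[C]_n.+1) :
  exists s : seq C, char_poly A = \prod_(x <- s) ('X - x%:P) /\
    forall p, \tr (horner_mx A p) = \sum_(x <- s) p.[x].
Proof.
have [P /unitarymx_unit P_unit] := Schur A (ltn0Sn n).
rewrite /similar_to /= conjumx // => T_trig; set T := P *m A *m invmx P in T_trig.
exists [seq T i i | i <- index_enum 'I_n.+1]; split.
  by rewrite big_map -(char_poly_uconj A P_unit) char_poly_trig.
move=> p; rewrite big_map; under eq_bigr do rewrite -horner_mx_trig_diag //.
by rewrite horner_mx_uconj // -[RHS]/(\tr _) mxtrace_mulC mulmxA mulVmx // mul1mx.
Qed.

Lemma cospectral_of_mxtrace_horner (C : numClosedFieldType) n (X Y : 'M[C]_n.+1) :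
  (forall p, \tr (horner_mx X p) = \tr (horner_mx Y p)) -> cospectral X Y.
Proof.
move=> eq_tr; rewrite /cospectral.
have [s [-> tr_s]] := mx_spectrum X; have [t [-> tr_t]] := mx_spectrum Y.
by apply: perm_big; apply: perm_eq_sum_horner => p; rewrite -tr_s -tr_t.
Qed.

Lemma horner_mx_intertwine (C : numClosedFieldType) n (Phi : {linear 'M[C]_n.+1 -> 'M[C]_n.+1})
    X Y : unital Phi -> (forall W, Phi (X *m W) = Y *m Phi W) ->
  forall p, Phi (horner_mx X p) = horner_mx Y p.
Proof.
move=> Phi_unital mulX; elim/poly_ind => [|p c IHp]; first by rewrite !rmorph0 linear0.
rewrite mulrC !rmorphD !rmorphM /= !horner_mx_X !horner_mx_C linearD /=.
by rewrite -mulmxE mulX IHp -scalemx1 linearZ /= Phi_unital.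
Qed.

Lemma cospectral_of_intertwine (C : numClosedFieldType) n (Phi : {linear 'M[C]_n -> 'M[C]_n})
    X Y : trace_preserving Phi -> unital Phi -> (forall W, Phi (X *m W) = Y *m Phi W) ->
  cospectral X Y.
Proof.
case: n => [|n] in Phi X Y * => Phi_tp Phi_unital mulX.
  by rewrite /cospectral (_ : X = Y) //; apply/matrixP => [[]].
apply: cospectral_of_mxtrace_horner => p.
by rewrite -Phi_tp (horner_mx_intertwine Phi_unital mulX).
Qed.

Theorem lemmaA2 (R : realType) (n : nat)
    (Phi1 Phi2 : {linear 'M[R[i]]_n -> 'M[R[i]]_n})
    (X Y : 'M[R[i]]_n) :
  completely_positive Phi1 -> trace_preserving Phi1 -> unital Phi1 ->
  completely_positive Phi2 -> trace_preserving Phi2 -> unital Phi2 ->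
  Phi1 X = Y -> Phi2 Y = X ->
  (forall W : 'M[R[i]]_n, Phi1 (X *m W) = Y *m Phi1 W) /\
  (forall W : 'M[R[i]]_n, Phi1 (W *m X) = Phi1 W *m Y) /\
  cospectral X Y /\
  adjoint_map Phi1 Y = X.
Proof.
move=> Phi1_cp Phi1_tp Phi1_unital Phi2_cp Phi2_tp Phi2_unital Phi1_X Phi2_Y.
have cycle_mulmx := cp_mulmx_of_cycle Phi1_cp Phi1_tp Phi1_unital Phi2_cp Phi2_tp Phi2_unital.
have mulX_adj := cycle_mulmx _ _ Phi1_X Phi2_Y.
have mulX : forall W, Phi1 (X *m W) = Y *m Phi1 W.
  rewrite -[X]mxadjK -[Y]mxadjK; apply: cycle_mulmx.
    by rewrite (cp_mxadj Phi1_cp Phi1_unital) Phi1_X.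
  by rewrite (cp_mxadj Phi2_cp Phi2_unital) Phi2_Y.
split; first exact: mulX.
split; first exact: (cp_mulmxr_of_mulmxl Phi1_cp Phi1_unital mulX_adj).
split; first exact: cospectral_of_intertwine mulX.
exact: adjoint_map_of_mulmxl Phi1_tp mulX_adj.
Qed.
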